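(* Let $m=2^i$ with $i\ge 1$. The subspaces of $\mathbb{R}^m$ defined by the generator matrices in $\mathcal{C}_i$ (constructed below) form a set of $(m-1)(m+2)=2^{2i}+2^i-2$ distinct $\tfrac{m}{2}$-dimensional subspaces of $\mathbb{R}^m$, and the distance between any two distinct subspaces of this set is either $\sqrt{m/4}$ or $\sqrt{m/2}$.
   Context: A subspace $P$ of $\mathbb{R}^m$ of dimension $n$ is specified by a generator matrix, an $n\times m$ matrix whose rows span $P$; the same symbol is used for the subspace and its generator matrix, and $P^\perp$ denotes (a generator matrix of) the orthogonal complement of $P$ in the ambient space. $I$ denotes an identity matrix of the appropriate size, $0$ a zero matrix, and $+$, $-$ denote $+1$, $-1$. Distance: for two $n$-dimensional subspaces $P,Q$ of $\mathbb{R}^m$, the principal angles $\theta_1,\dots,\theta_n\in[0,\pi/2]$ are defined by $\cos\theta_k=\max_{u\in P}\max_{v\in Q} u\cdot v = u_k\cdot v_k$ for $k=1,\dots,n$, subject to $u\cdot u=v\cdot v=1$ and $u\cdot u_j=0$, $v\cdot v_j=0$ for $1\le j\le k-1$. The distance is $d(P,Q)=\sqrt{\sin^2\theta_1+\cdots+\sin^2\theta_n}$. Sets $\mathcal{Q}_i$ of $2^{i-1}\times 2^{i-1}$ matrices: $\mathcal{Q}_1=\{(+),(-)\}$, and for $i\ge 2$, $\mathcal{Q}_i=\left\{\begin{pmatrix}+&0\\0&+\end{pmatrix}\otimes Q,\ \begin{pmatrix}+&0\\0&-\end{pmatrix}\otimes Q,\ \begin{pmatrix}0&+\\+&0\end{pmatrix}\otimes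 Q,\ \begin{pmatrix}0&+\\-&0\end{pmatrix}\otimes Q \;:\; Q\in\mathcal{Q}_{i-1}\right\}$, where $\otimes$ is the Kronecker product. Sets $\mathcal{C}_i$ of $2^{i-1}\times 2^i$ generator matrices: $\mathcal{C}_1=\{(+\ 0),(0\ +),(+\ +),(+\ -)\}$ (four lines in $\mathbb{R}^2$), and for $i\ge2$, $\mathcal{C}_i=\left\{(I\ 0),\ (0\ I),\ \begin{pmatrix}P&0\\0&P\end{pmatrix},\ \begin{pmatrix}P&0\\0&P^\perp\end{pmatrix},\ (I\ Q)\;:\; P\in\mathcal{C}_{i-1},\ Q\in\mathcal{Q}_i\right\}$, where $I$ is the $2^{i-1}\times 2^{i-1}$ identity. Thus $(I\ 0)$ spans the first $2^{i-1}$ coordinate vectors of $\mathbb{R}^{2^i}$, $(0\ I)$ the last $2^{i-1}$, $\begin{pmatrix}P&0\\0&P\end{pmatrix}$ is $P\oplus P$ and $\begin{pmatrix}P&0\\0&P^\perp\end{pmatrix}$ is $P\oplus P^\perp$ (with $P,P^\perp\subset\mathbb{R}^{2^{i-1}}$), and $(I\ Q)$ is the row space of the $2^{i-1}\times 2^i$ matrix $[I\,|\,Q]$. *)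

From HB Require Import structures.
From mathcomp Require Import all_boot all_order all_algebra.
From mathcomp Require Import reals.
Set Implicit Arguments. Unset Strict Implicit. Unset Printing Implicit Defensive.
Import Order.TTheory GRing.Theory Num.Theory.
Local Open Scope ring_scope.

Lemma dbl_pow2 (k : nat) : (2 ^ k + 2 ^ k = 2 ^ k.+1)%N.
Proof. by rewrite expnS mul2n addnn. Qed.

Section Constr.
Variable R : realType.

Definition cast2 (k : nat) (A : 'M[R]_(2 ^ k + 2 ^ k)) : 'M[R]_(2 ^ k.+1) :=
  castmx (dbl_pow2 k, dbl_pow2 k) A.

Definition kron22 (n : nat) (a b c d : R) (Q : 'M[R]_n) : 'M[R]_(n + n) :=
  block_mx (a *: Q) (b *: Q) (c *: Q) (d *: Q).

(* Qs k = the set Q_{k+1} of 2^k x 2^k matrices (listed in construction order) *)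
Fixpoint Qs (k : nat) : seq 'M[R]_(2 ^ k) :=
  match k return seq 'M[R]_(2 ^ k) with
  | 0 => [:: 1%:M; (-1)%:M]
  | k'.+1 =>
      flatten [seq [:: cast2 (kron22 1 0 0 1 Q); cast2 (kron22 1 0 0 (-1) Q);
                       cast2 (kron22 0 1 1 0 Q); cast2 (kron22 0 1 (-1) 0 Q)]
              | Q <- Qs k']
  end.

Definition perpmx (n : nat) (P : 'M[R]_n) : 'M[R]_n := kermx P^T.

Definition line2 (a b : R) : 'M[R]_2 :=
  \matrix_(i < 2, j < 2) if i == 0 then (if j == 0 then a else b) else 0.

(* Cs k = the set C_{k+1}.  Each subspace of R^(2^(k+1)) is represented by a
   square 2^(k+1) x 2^(k+1) matrix whose ROW SPACE is the subspace (the rows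
   of the paper's 2^k x 2^(k+1) generator matrix, padded with zero rows). *)
Fixpoint Cs (k : nat) : seq 'M[R]_(2 ^ k.+1) :=
  match k return seq 'M[R]_(2 ^ k.+1) with
  | 0 => [:: line2 1 0; line2 0 1; line2 1 1; line2 1 (-1)]
  | k'.+1 =>
      [:: cast2 (block_mx 1%:M 0 0 0);
          cast2 (block_mx 0 1%:M 0 0)]
      ++ [seq cast2 (block_mx P 0 0 P) | P <- Cs k']
      ++ [seq cast2 (block_mx P 0 0 (perpmx P)) | P <- Cs k']
      ++ [seq cast2 (block_mx 1%:M Q 0 0) | Q <- Qs k'.+1]
  end.

Definition dotv (m : nat) (u v : 'rV[R]_m) : R := (u *m v^T) 0 0.

Definition principal_seq (p q m n : nat) (A : 'M[R]_(p, m)) (B : 'M[R]_(q, m))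
    (us vs : 'I_n -> 'rV[R]_m) : Prop :=
  forall k : 'I_n,
    [/\ (us k <= A)%MS /\ (vs k <= B)%MS,
        dotv (us k) (us k) = 1, dotv (vs k) (vs k) = 1,
        (forall j : 'I_n, (j < k)%N ->
            dotv (us k) (us j) = 0 /\ dotv (vs k) (vs j) = 0) &
        (forall u v : 'rV[R]_m, (u <= A)%MS -> (v <= B)%MS ->
            dotv u u = 1 -> dotv v v = 1 ->
            (forall j : 'I_n, (j < k)%N -> dotv u (us j) = 0 /\ dotv v (vs j) = 0) ->
            dotv u v <= dotv (us k) (vs k))].

(* d(P,Q) = sqrt(sum_k sin^2 theta_k), with cos theta_k = us k . vs k *)
Definition dist_of (m n : nat) (us vs : 'I_n -> 'rV[R]_m) : R :=
  Num.sqrt (\sum_(k < n) (1 - (dotv (us k) (vs k)) ^+ 2)).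

End Constr.

From mathcomp Require Import all_boot all_order all_algebra.
From mathcomp Require Import reals.
From mathcomp Require Import ring lra zify.
From mathcomp Require Import boolp classical_sets topology normedtype matrix_normedtype derive.
Import Order.TTheory GRing.Theory Num.Theory numFieldNormedType.Exports.
Set Implicit Arguments. Unset Strict Implicit. Unset Printing Implicit Defensive.
Local Open Scope ring_scope.

(* Represent each subspace A by its orthogonal projector P_A.  A principal
   sequence (us, vs) of A and B consists of orthonormal bases of A and B whose
   cross Gram matrix is diagonal (maximality of each pair forces the mixed
   products to vanish), hence d(A,B)^2 = n - tr (P_A P_B) with n = dim A.
   The projectors of C_(i+1) are diag(I,0), diag(0,I), diag(P,P), diag(P,I-P)
   for P a projector of C_i, and (1/2)[I Q; Q^T I] for Q in Q_(i+1); by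
   induction tr (P_A P_B) is 0 or n/2 for distinct members A, B, which gives
   the two distances and, as tr (P_A P_A) = n, that the members are distinct.
   Principal sequences exist because the unit spheres are compact. *)

Section InnerProduct.
Variable R : realType.

Lemma dotvE m (u v : 'rV[R]_m) : dotv u v = \sum_i u 0 i * v 0 i.
Proof. by rewrite /dotv mxE; apply: eq_bigr => i _; rewrite mxE. Qed.

Lemma dotvC m (u v : 'rV[R]_m) : dotv u v = dotv v u.
Proof. by rewrite !dotvE; apply: eq_bigr => i _; rewrite mulrC. Qed.

Lemma dotvDr m (u v w : 'rV[R]_m) : dotv u (v + w) = dotv u v + dotv u w.
Proof. by rewrite !dotvE -big_split; apply: eq_bigr => i _; rewrite mxE mulrDr. Qed.

Lemma dotvZr m a (u v : 'rV[R]_m) : dotv u (a *: v) = a * dotv u v.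
Proof. by rewrite !dotvE mulr_sumr; apply: eq_bigr => i _; rewrite mxE mulrCA. Qed.

Lemma dotvDl m (u v w : 'rV[R]_m) : dotv (v + w) u = dotv v u + dotv w u.
Proof. by rewrite dotvC dotvDr !(dotvC u). Qed.

Lemma dotvZl m a (u v : 'rV[R]_m) : dotv (a *: v) u = a * dotv v u.
Proof. by rewrite dotvC dotvZr dotvC. Qed.

Lemma dotv_ge0 m (u : 'rV[R]_m) : 0 <= dotv u u.
Proof. by rewrite dotvE sumr_ge0 // => i _; rewrite -expr2 sqr_ge0. Qed.

Lemma dotv_eq0 m (u : 'rV[R]_m) : (dotv u u == 0) = (u == 0).
Proof.
apply/idP/eqP => [|->]; last by rewrite dotvE big1 // => i _; rewrite mxE mul0r.
rewrite dotvE psumr_eq0 => [/allP u0|i _]; last by rewrite -expr2 sqr_ge0.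
apply/rowP => i; rewrite mxE; apply/eqP.
by have := u0 i (mem_index_enum _); rewrite -expr2 sqrf_eq0.
Qed.

Lemma mulmx_trE m n p (U : 'M[R]_(m, n)) (V : 'M[R]_(p, n)) i j :
  (U *m V^T) i j = dotv (row i U) (row j V).
Proof. by rewrite dotvE mxE; apply: eq_bigr => l _; rewrite !mxE. Qed.

Lemma unit_mul_tr m (u : 'rV[R]_m) : dotv u u = 1 -> u *m u^T = 1%:M.
Proof.
by move=> uu; apply/rowP => i; rewrite (ord1 i) mulmx_trE !mxE !row_id uu.
Qed.

Lemma unit_sub_exists p m (S : 'M[R]_(p, m)) : (0 < \rank S)%N ->
  exists2 u : 'rV[R]_m, (u <= S)%MS & dotv u u = 1.
Proof.
rewrite lt0n mxrank_eq0 -nz_row_eq0 => w_neq0; set w := nz_row S in w_neq0 *.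
have w_gt0 : 0 < dotv w w by rewrite lt_def dotv_eq0 w_neq0 dotv_ge0.
exists ((Num.sqrt (dotv w w))^-1 *: w); first by rewrite scalemx_sub ?nz_row_sub.
by rewrite dotvZl dotvZr mulrA -expr2 exprVn sqr_sqrtr ?ltW // mulVf ?gt_eqF.
Qed.

Lemma unit_coord_bound m (u : 'rV[R]_m) a : dotv u u = 1 -> -1 <= u 0 a <= 1.
Proof.
rewrite dotvE (bigD1 a) //= => uu.
have : 0 <= \sum_(i | i != a) u 0 i * u 0 i by apply: sumr_ge0 => i _; rewrite -expr2 sqr_ge0.
by move=> ge0; apply/andP; split; nra.
Qed.

Lemma submx_cokerE p m (A : 'M[R]_(p, m)) (u : 'rV[R]_m) :
  (u <= A)%MS <-> dotv (u *m cokermx A) (u *m cokermx A) = 0.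
Proof. by rewrite submxE -dotv_eq0; split=> /eqP. Qed.

End InnerProduct.

Section OrthogonalProjection.
Variable R : realType.

Definition orthonormal r m (U : 'M[R]_(r, m)) := U *m U^T == 1%:M.

Lemma orthonormal_rank r m (U : 'M[R]_(r, m)) : orthonormal U -> \rank U = r.
Proof.
move=> /eqP UU; apply/eqP; rewrite eqn_leq rank_leq_row /=.
by rewrite -{1}(mxrank1 R r) -UU mxrankM_maxl.
Qed.

Lemma eqmx_sub_rank p q m (A : 'M[R]_(p, m)) (B : 'M[R]_(q, m)) :
  (A <= B)%MS -> \rank A = \rank B -> (A == B)%MS.
Proof. by move=> sAB rAB; rewrite -(mxrank_leqif_eq sAB).2 rAB. Qed.

(* Gram-Schmidt: a unit vector u of S, followed by an orthonormal basis of
   the part of S orthogonal to u. *)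
Lemma orthonormal_basis r p m (S : 'M[R]_(p, m)) : \rank S = r ->
  exists2 U : 'M[R]_(r, m), orthonormal U & (U == S)%MS.
Proof.
elim: r p S => [|r IH] p S rS.
  exists 0; first by apply/eqP/matrixP => [[]].
  by move/eqP: rS; rewrite mxrank_eq0 => /eqP->; rewrite /eqmx !sub0mx.
have [u uS uu] := unit_sub_exists (ltac:(by rewrite rS) : (0 < \rank S)%N).
have u_neq0 : u != 0 by rewrite -dotv_eq0 uu oner_eq0.
pose S' := (S :&: kermx u^T)%MS.
have rK : \rank (kermx u^T) = (m - 1)%N by rewrite mxrank_ker mxrank_tr rank_rV u_neq0.
have uS' : ~~ (u <= S')%MS.
  rewrite sub_capmx negb_and; apply/orP; right; apply/negP => /sub_kermxP.
  by rewrite unit_mul_tr // => /rowP/(_ 0); rewrite !mxE eqxx => /eqP; rewrite oner_eq0.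
have rS'_lt : (\rank S' < \rank S)%N.
  have [le_S'S eq_S'S] := mxrank_leqif_sup (capmxSl S (kermx u^T)).
  by rewrite ltn_neqAle le_S'S andbT eq_S'S; apply: contra uS' => /(submx_trans uS).
have rS' : \rank S' = r.
  have := mxrank_sum_cap S (kermx u^T); have := rank_leq_col (S + kermx u^T)%MS.
  rewrite -/S' rK rS; have := rank_leq_col S; rewrite rS; lia.
have [U' /eqP U'U' eU'] := IH _ S' rS'.
have U'u : U' *m u^T = 0 by apply/sub_kermxP; rewrite (eqmxP eU') capmxSr.
have UU : orthonormal (col_mx u U' : 'M_(1 + r, m)).
  rewrite /orthonormal tr_col_mx mul_col_row unit_mul_tr // U'U' U'u.
  by rewrite -[u *m _]trmxK trmx_mul trmxK U'u trmx0 -scalar_mx_block.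
have sUS : (col_mx u U' <= S)%MS by rewrite col_mx_sub uS (eqmxP eU') capmxSl.
by exists (col_mx u U'); rewrite // eqmx_sub_rank // (orthonormal_rank UU) rS.
Qed.

Definition is_orthoproj m (P : 'M[R]_m) := (P^T == P) && (P *m P == P).

Lemma orthoproj_uniq m (P P' : 'M[R]_m) :
  is_orthoproj P -> is_orthoproj P' -> (P == P')%MS -> P = P'.
Proof.
move=> /andP[/eqP PT /eqP PP] /andP[/eqP P'T /eqP P'P'] /andP[/submxP[D1 eP] /submxP[D2 eP']].
have PP' : P *m P' = P by rewrite {1}eP -mulmxA P'P' -eP.
have P'P : P' *m P = P' by rewrite {1}eP' -mulmxA PP -eP'.
by rewrite -PP' -[P]PT -[P']P'T -trmx_mul P'P.
Qed.

Lemma orthoproj_orthonormal r m (U : 'M[R]_(r, m)) :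
  orthonormal U -> is_orthoproj (U^T *m U) && (U^T *m U == U)%MS.
Proof.
move=> /eqP UU; rewrite /is_orthoproj trmx_mul trmxK eqxx mulmxA -(mulmxA U^T) UU mulmx1 eqxx.
by rewrite /eqmx submxMl -{1}(mul1mx U) -UU -mulmxA submxMl.
Qed.

Lemma orthoproj_exists p m (A : 'M[R]_(p, m)) :
  exists P : 'M[R]_m, is_orthoproj P && (P == A)%MS.
Proof.
have [U UU eUA] := orthonormal_basis (erefl (\rank A)); exists (U^T *m U).
have /andP[-> eU] := orthoproj_orthonormal UU.
by apply/eqmxP; apply: eqmx_trans (eqmxP eU) (eqmxP eUA).
Qed.

Definition orthoproj p m (A : 'M[R]_(p, m)) : 'M[R]_m := xchoose (orthoproj_exists A).

Lemma orthoprojP p m (A : 'M[R]_(p, m)) : is_orthoproj (orthoproj A) /\ (orthoproj A == A)%MS.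
Proof. exact/andP/(xchooseP (orthoproj_exists A)). Qed.

Lemma orthoproj_eq p m (A : 'M[R]_(p, m)) (P : 'M[R]_m) :
  is_orthoproj P -> (P == A)%MS -> orthoproj A = P.
Proof.
have [oA eA] := orthoprojP A => oP ePA; apply: orthoproj_uniq => //.
by apply/eqmxP; apply: eqmx_trans (eqmxP eA) (eqmx_sym (eqmxP ePA)).
Qed.

Lemma orthoproj_eqmx p q m (A : 'M[R]_(p, m)) (B : 'M[R]_(q, m)) :
  (A == B)%MS -> orthoproj A = orthoproj B.
Proof.
move=> eAB; have [oB eB] := orthoprojP B; apply: orthoproj_eq oB _.
by apply/eqmxP; apply: eqmx_trans (eqmxP eB) (eqmx_sym (eqmxP eAB)).
Qed.

Lemma orthoproj_orthonormal_eq r p m (U : 'M[R]_(r, m)) (A : 'M[R]_(p, m)) :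
  orthonormal U -> (U == A)%MS -> orthoproj A = U^T *m U.
Proof.
move=> UU eUA; have /andP[oU eU] := orthoproj_orthonormal UU.
by apply: orthoproj_eq oU _; apply/eqmxP; apply: eqmx_trans (eqmxP eU) (eqmxP eUA).
Qed.

Lemma rank_orthoproj p m (A : 'M[R]_(p, m)) : (\rank A)%:R = \tr (orthoproj A).
Proof.
have [U UU eUA] := orthonormal_basis (erefl (\rank A)).
by rewrite (orthoproj_orthonormal_eq UU eUA) mxtrace_mulC (eqP UU) mxtrace1.
Qed.

Lemma is_orthoproj1 m : is_orthoproj (1%:M : 'M[R]_m).
Proof. by rewrite /is_orthoproj trmx1 mulmx1 eqxx. Qed.

Lemma is_orthoproj0 m : is_orthoproj (0 : 'M[R]_m).
Proof. by rewrite /is_orthoproj trmx0 mulmx0 eqxx. Qed.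

Lemma is_orthoprojC m (P : 'M[R]_m) : is_orthoproj P -> is_orthoproj (1%:M - P).
Proof.
move=> /andP[/eqP PT /eqP PP]; rewrite /is_orthoproj linearB /= trmx1 PT eqxx /=.
by rewrite mulmxBl !mulmxBr !mul1mx !mulmx1 PP subrr subr0 eqxx.
Qed.

Lemma orthoproj1 m : orthoproj (1%:M : 'M[R]_m) = 1%:M.
Proof. by apply: orthoproj_eq; rewrite ?is_orthoproj1 // /eqmx submx_refl. Qed.

Lemma orthoproj0 p m : orthoproj (0 : 'M[R]_(p, m)) = 0.
Proof. by apply: orthoproj_eq; rewrite ?is_orthoproj0 // /eqmx !sub0mx. Qed.

Lemma orthoproj_perpmx m (A : 'M[R]_m) : orthoproj (perpmx A) = 1%:M - orthoproj A.
Proof.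
have [oP /andP[/submxP[D1 eP] /submxP[D2 eA]]] := orthoprojP A.
move: (oP) => /andP[/eqP PT /eqP PP]; set P := orthoproj A in oP PT PP eP eA *.
apply: orthoproj_eq (is_orthoprojC oP) _; apply/andP; split.
  apply/sub_kermxP; rewrite eA trmx_mul PT mulmxA mulmxBl mul1mx PP subrr.
  by rewrite mul0mx.
have KP : perpmx A *m P = 0.
  by rewrite -PT eP trmx_mul mulmxA (sub_kermxP (submx_refl _)) mul0mx.
by rewrite -[X in (X <= _)%MS]subr0 -KP -[X in X - _]mulmx1 -mulmxBr submxMl.
Qed.

Lemma mulmx_tr_rV m (u v : 'rV[R]_m) : u *m v^T = (dotv u v)%:M.
Proof. by apply/rowP => i; rewrite (ord1 i) mulmx_trE !mxE !row_id. Qed.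

Definition lineproj m (r : 'rV[R]_m) : 'M[R]_m := (dotv r r)^-1 *: (r^T *m r).

Lemma orthoproj_rV m (r : 'rV[R]_m) : r != 0 -> orthoproj r = lineproj r.
Proof.
rewrite -dotv_eq0 => rr; apply: orthoproj_eq.
  rewrite /is_orthoproj /lineproj linearZ /= trmx_mul trmxK eqxx /=.
  rewrite -scalemxAl -scalemxAr scalerA mulmxA -(mulmxA r^T) mulmx_tr_rV.
  by rewrite mul_mx_scalar -scalemxAl scalerA mulfVK.
apply/andP; split; first by rewrite /lineproj scalemx_sub // submxMl.
apply/submxP; exists r; rewrite /lineproj -scalemxAr mulmxA mulmx_tr_rV.
by rewrite mul_scalar_mx scalerA mulVf ?scale1r.
Qed.

Lemma mxtrace_lineproj m (r : 'rV[R]_m) : r != 0 -> \tr (lineproj r) = 1.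
Proof.
rewrite -dotv_eq0 => rr; rewrite /lineproj mxtraceZ mxtrace_mulC mulmx_tr_rV.
by rewrite mxtrace_scalar mulr1n mulVf.
Qed.

Lemma mxtrace_lineproj_mul m (r s : 'rV[R]_m) :
  \tr (lineproj r *m lineproj s) = dotv r s ^+ 2 / (dotv r r * dotv s s).
Proof.
rewrite /lineproj -scalemxAl -scalemxAr scalerA mxtraceZ -mulmxA mxtrace_mulC.
rewrite -!mulmxA mulmx_tr_rV mul_mx_scalar -scalemxAr mxtraceZ mulmx_tr_rV.
by rewrite mxtrace_scalar mulr1n invfM expr2 dotvC; ring.
Qed.

End OrthogonalProjection.

Section PrincipalVectors.
Variable R : realType.

Lemma linear_le_quadratic (a c : R) : (forall s, s * a <= s ^+ 2 * c) -> a = 0.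
Proof.
move=> le_ac; pose d := `|c| + 1; pose x := a / d.
have d_gt0 : 0 < d by rewrite ltr_pwDr ?normr_ge0.
have ax : a = x * d by rewrite /x divfK ?gt_eqF.
have c_le : c <= d - 1 by rewrite /d addrK ler_norm.
have := le_ac x; rewrite ax => le_x.
have x2_le0 : x ^+ 2 <= 0 by have := sqr_ge0 x; nra.
by move: x2_le0; rewrite le_eqVlt ltNge sqr_ge0 orbF sqrf_eq0 => /eqP->; rewrite mul0r.
Qed.

(* The rational parametrisation s |-> ((1 - s^2) / (1 + s^2), 2 s / (1 + s^2))
   of the unit circle, through y at s = 0 and tangent to z there. *)
Definition rotv m (s : R) (y z : 'rV[R]_m) :=
  ((1 - s ^+ 2) / (1 + s ^+ 2)) *: y + ((2 * s) / (1 + s ^+ 2)) *: z.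

Section Circle.
Variables (m : nat) (y z : 'rV[R]_m).
Hypotheses (yy : dotv y y = 1) (zz : dotv z z = 1) (yz : dotv y z = 0).

Lemma rotv_unit s : dotv (rotv s y z) (rotv s y z) = 1.
Proof.
have s2_neq0 : 1 + s ^+ 2 != 0 by rewrite gt_eqF // ltr_pwDl // sqr_ge0.
by rewrite !(dotvDr, dotvDl, dotvZr, dotvZl) yy zz yz dotvC yz; field.
Qed.

Lemma rotv_max_orth x : (forall s, dotv x (rotv s y z) <= dotv x y) -> dotv x z = 0.
Proof.
move=> le_xy; apply: (@linear_le_quadratic _ (dotv x y)) => s.
have s2_gt0 : 0 < 1 + s ^+ 2 by rewrite ltr_pwDl // sqr_ge0.
have := le_xy s; rewrite dotvDr !dotvZr -!mulrA (mulrC _ (dotv x y)) (mulrC _ (dotv x z)).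
rewrite !mulrA -mulrDl ler_pdivrMr //; nra.
Qed.

End Circle.

Definition feasible p q m n (A : 'M[R]_(p, m)) (B : 'M[R]_(q, m))
    (us vs : 'I_n -> 'rV[R]_m) (j : nat) (u v : 'rV[R]_m) :=
  [/\ (u <= A)%MS, (v <= B)%MS, dotv u u = 1, dotv v v = 1 &
      forall i : 'I_n, (i < j)%N -> dotv u (us i) = 0 /\ dotv v (vs i) = 0].

Definition principal_step p q m n (A : 'M[R]_(p, m)) (B : 'M[R]_(q, m))
    (us vs : 'I_n -> 'rV[R]_m) (k : 'I_n) :=
  feasible A B us vs k (us k) (vs k) /\
  forall u v, feasible A B us vs k u v -> dotv u v <= dotv (us k) (vs k).

Lemma principal_seqP p q m n (A : 'M[R]_(p, m)) (B : 'M[R]_(q, m)) us vs :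
  principal_seq A B us vs <-> forall k : 'I_n, principal_step A B us vs k.
Proof.
split=> Pk k.
  have [[uA vB] uu vv orth max] := Pk k.
  by split=> [|u v [uA' vB' uu' vv' orth']]; [split | apply: max].
have [[uA vB uu vv orth] max] := Pk k.
by split=> // u v uA' vB' uu' vv' orth'; apply: max.
Qed.

Lemma feasible_sym p q m n (A : 'M[R]_(p, m)) (B : 'M[R]_(q, m)) us vs j
    (u v : 'rV[R]_m) :
  feasible A B us vs j u v -> feasible (n := n) B A vs us j v u.
Proof. by case=> uA vB uu vv orth; split=> // i /orth[]. Qed.

Lemma principal_seq_sym p q m n (A : 'M[R]_(p, m)) (B : 'M[R]_(q, m))
    (us vs : 'I_n -> 'rV[R]_m) :
  principal_seq A B us vs -> principal_seq B A vs us.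
Proof.
move/principal_seqP => Pk; apply/principal_seqP => k; have [fk max] := Pk k.
split; first exact: feasible_sym.
by move=> u v /feasible_sym fvu; rewrite dotvC (dotvC (vs k)); apply: max.
Qed.

Section PrincipalSequence.
Variables (p q m n : nat) (A : 'M[R]_(p, m)) (B : 'M[R]_(q, m)).
Variables (us vs : 'I_n -> 'rV[R]_m).
Hypothesis principal : principal_seq A B us vs.

(* Rotating vs j towards vs k keeps the pair feasible at step j, so the
   maximality of (us j, vs j) forces us j to be orthogonal to vs k. *)
Lemma principal_biorth (j k : 'I_n) : (j < k)%N -> dotv (us j) (vs k) = 0.
Proof.
move=> jk; have /principal_seqP Pk := principal.
have [[uA vB uu vv orth] max] := Pk j; have [[_ vB' _ vv' orth'] _] := Pk k.
have [_ vjk] := orth' j jk.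
apply: rotv_max_orth; rewrite ?(dotvC (vs j)) // => s; apply: max; split=> //.
- by rewrite addmx_sub ?scalemx_sub.
- by apply: rotv_unit; rewrite // dotvC.
move=> i ij; have [uji vji] := orth i ij; have [_ vki] := orth' i (ltn_trans ij jk).
by rewrite dotvDl !dotvZl vji vki !mulr0 addr0.
Qed.

Lemma principal_orthonormal : orthonormal (\matrix_i us i).
Proof.
have /principal_seqP Pk := principal.
apply/eqP/matrixP => i j; rewrite mulmx_trE !rowK !mxE.
have [ij|ji|/val_inj <-] := ltngtP i j.
- by have [[_ _ _ _ /(_ i ij) [uji _]] _] := Pk j; rewrite dotvC uji -val_eqE (ltn_eqF ij).
- by have [[_ _ _ _ /(_ j ji) [uij _]] _] := Pk i; rewrite uij -val_eqE (gtn_eqF ji).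
- by have [[_ _ -> _ _] _] := Pk i; rewrite eqxx.
Qed.

End PrincipalSequence.

Lemma principal_cross_diag p q m n (A : 'M[R]_(p, m)) (B : 'M[R]_(q, m))
    (us vs : 'I_n -> 'rV[R]_m) (i j : 'I_n) :
  principal_seq A B us vs -> i != j ->
  ((\matrix_i us i) *m (\matrix_i vs i)^T) i j = 0.
Proof.
move=> P; rewrite mulmx_trE !rowK; have [ij|ji|/val_inj->] := ltngtP i j; rewrite ?eqxx //.
  by rewrite (principal_biorth P).
by rewrite dotvC (principal_biorth (principal_seq_sym P)).
Qed.

Lemma tr_mul_tr_diag n (G : 'M[R]_n) : (forall i j, i != j -> G i j = 0) ->
  \tr (G *m G^T) = \sum_i G i i ^+ 2.
Proof.
move=> G_diag; apply: eq_bigr => i _; rewrite mxE (bigD1 i) //= big1 ?addr0.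
  by rewrite mxE expr2.
by move=> j ji; rewrite G_diag ?mul0r // eq_sym.
Qed.

Lemma principal_tr_orthoproj p q m n (A : 'M[R]_(p, m)) (B : 'M[R]_(q, m))
    (us vs : 'I_n -> 'rV[R]_m) :
  principal_seq A B us vs -> \rank A = n -> \rank B = n ->
  \tr (orthoproj A *m orthoproj B) = \sum_k dotv (us k) (vs k) ^+ 2.
Proof.
move=> P rA rB; set U := \matrix_i us i; set V := \matrix_i vs i.
have UU : orthonormal U := principal_orthonormal P.
have VV : orthonormal V := principal_orthonormal (principal_seq_sym P).
have /principal_seqP Pk := P.
have sUA : (U <= A)%MS by apply/row_subP => i; rewrite rowK; have [[]] := Pk i.
have sVB : (V <= B)%MS by apply/row_subP => i; rewrite rowK; have [[]] := Pk i.
rewrite (orthoproj_orthonormal_eq UU (eqmx_sub_rank sUA _)); last by rewrite orthonormal_rank.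
rewrite (orthoproj_orthonormal_eq VV (eqmx_sub_rank sVB _)); last by rewrite orthonormal_rank.
rewrite -mulmxA mxtrace_mulC.
have -> : U *m (V^T *m V) *m U^T = (U *m V^T) *m (U *m V^T)^T.
  by rewrite trmx_mul trmxK !mulmxA.
rewrite tr_mul_tr_diag => [|i j]; last exact: principal_cross_diag.
by apply: eq_bigr => k _; rewrite mulmx_trE !rowK.
Qed.

Lemma principal_dist p q m n (A : 'M[R]_(p, m)) (B : 'M[R]_(q, m))
    (us vs : 'I_n -> 'rV[R]_m) :
  principal_seq A B us vs -> \rank A = n -> \rank B = n ->
  dist_of us vs = Num.sqrt (n%:R - \tr (orthoproj A *m orthoproj B)).
Proof.
move=> P rA rB; rewrite (principal_tr_orthoproj P rA rB) /dist_of sumrB.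
by rewrite sumr_const card_ord.
Qed.

End PrincipalVectors.

Section Existence.
Variable R : realType.
Local Open Scope classical_set_scope.

Definition coord_continuous_fun N m (L : 'rV[R]_N -> 'rV[R]_m) :=
  forall a, continuous (fun z => L z 0 a).

Lemma continuous_dotv N m (L M : 'rV[R]_N -> 'rV[R]_m) :
  coord_continuous_fun L -> coord_continuous_fun M ->
  continuous (fun z => dotv (L z) (M z)).
Proof.
move=> cL cM; under eq_fun do rewrite dotvE.
apply: continuous_big => [|i _ z]; first exact: add_continuous.
by apply: continuousM; [exact: cL | exact: cM].
Qed.

Lemma coord_continuous_cst N m (u : 'rV[R]_m) :
  coord_continuous_fun (fun _ : 'rV[R]_N => u).
Proof. by move=> a; exact: cst_continuous. Qed.

Lemma coord_continuous_mulmx N m p (L : 'rV[R]_N -> 'rV[R]_m) (X : 'M[R]_(m, p)) :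
  coord_continuous_fun L -> coord_continuous_fun (fun z => L z *m X).
Proof.
move=> cL c; under eq_fun do rewrite mxE.
apply: continuous_big => [|i _ z]; first exact: add_continuous.
by apply: continuousM; [exact: cL | exact: cst_continuous].
Qed.

Lemma coord_continuous_lsubmx m n :
  coord_continuous_fun (fun z : 'rV[R]_(m + n) => lsubmx z).
Proof. by move=> a; under eq_fun do rewrite mxE; exact: coord_continuous. Qed.

Lemma coord_continuous_rsubmx m n :
  coord_continuous_fun (fun z : 'rV[R]_(m + n) => rsubmx z).
Proof. by move=> a; under eq_fun do rewrite mxE; exact: coord_continuous. Qed.

Lemma closed_level N (f : 'rV[R]_N -> R) c : continuous f -> closed [set z | f z = c].
Proof.
move=> cf; change (closed (f @^-1` [set x | x = c])).
by apply: preimage_closed; [move=> z _; exact: cf | exact: closed_eq].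
Qed.

Section FeasibleSet.
Variables (p q m n : nat) (A : 'M[R]_(p, m)) (B : 'M[R]_(q, m)).
Variables (us vs : 'I_n -> 'rV[R]_m) (j : nat).

Definition feasible_set :=
  [set z : 'rV[R]_(m + m) | feasible A B us vs j (lsubmx z) (rsubmx z)].

Lemma feasible_set_closed : closed feasible_set.
Proof.
pose L (z : 'rV[R]_(m + m)) := lsubmx z; pose M (z : 'rV[R]_(m + m)) := rsubmx z.
have cL : coord_continuous_fun L := @coord_continuous_lsubmx m m.
have cM : coord_continuous_fun M := @coord_continuous_rsubmx m m.
have cLA := coord_continuous_mulmx (X := cokermx A) cL.
have cMB := coord_continuous_mulmx (X := cokermx B) cM.
have -> : feasible_set =
    [set z | dotv (L z *m cokermx A) (L z *m cokermx A) = 0]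
    `&` [set z | dotv (M z *m cokermx B) (M z *m cokermx B) = 0]
    `&` [set z | dotv (L z) (L z) = 1] `&` [set z | dotv (M z) (M z) = 1]
    `&` \bigcap_(i in [set i : 'I_n | (i < j)%N])
          ([set z | dotv (L z) (us i) = 0] `&` [set z | dotv (M z) (vs i) = 0]).
  apply/seteqP; split=> z /=.
    by case=> /submx_cokerE uA /submx_cokerE vB uu vv orth; do 4?split => // i /orth[].
  by case=> [[[[/submx_cokerE uA /submx_cokerE vB] uu vv] orth]]; split=> // i /orth[].
repeat apply: closedI; try apply: closed_bigI => i _; try apply: closedI;
  apply: closed_level; apply: continuous_dotv => //; exact: coord_continuous_cst.
Qed.

Lemma feasible_set_compact : compact feasible_set.
Proof.
pose box := [set z : 'rV[R]_(m + m) | forall i, `[(-1 : R), 1] (z ord0 i)].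
have box_compact : compact box.
  by apply: (@rV_compact _ _ (fun=> `[(-1 : R), 1])) => i; exact: segment_compact.
apply: subclosed_compact feasible_set_closed box_compact _ => z [_ _ uu vv _] i.
rewrite /= in_itv /=; case: (splitP i) => a ia.
  have -> : i = lshift m a by apply/val_inj.
  by have := unit_coord_bound a uu; rewrite mxE.
have -> : i = rshift m a by apply/val_inj.
by have := unit_coord_bound a vv; rewrite mxE.
Qed.

End FeasibleSet.

Lemma unit_sub_orth_exists p m n (A : 'M[R]_(p, m)) (w : 'I_n -> 'rV[R]_m) j :
  (j < \rank A)%N -> (j <= n)%N ->
  exists u, [/\ (u <= A)%MS, dotv u u = 1 & forall i : 'I_n, (i < j)%N -> dotv u (w i) = 0].
Proof.
move=> jA jn; pose X : 'M[R]_(j, m) := \matrix_(i < j) w (widen_ord jn i).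
have rK : \rank (kermx X^T) = (m - \rank X)%N by rewrite mxrank_ker mxrank_tr.
have := mxrank_sum_cap A (kermx X^T); have := rank_leq_col (A + kermx X^T)%MS.
have := rank_leq_col A; have := rank_leq_row X; rewrite rK => *.
have [|u uAK uu] := @unit_sub_exists _ _ _ (A :&: kermx X^T)%MS; first lia.
exists u; split=> //; first exact: submx_trans uAK (capmxSl _ _).
move=> i ij; have /sub_kermxP := submx_trans uAK (capmxSr _ _).
move/rowP/(_ (Ordinal ij)); rewrite mulmx_trE rowK mxE row_id.
by congr (dotv u (w _) = 0); apply/val_inj.
Qed.

Lemma feasible_max p q m n (A : 'M[R]_(p, m)) (B : 'M[R]_(q, m))
    (us vs : 'I_n -> 'rV[R]_m) j :
  (j < n)%N -> (n <= \rank A)%N -> (n <= \rank B)%N ->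
  exists u v, feasible A B us vs j u v /\
    forall u' v', feasible A B us vs j u' v' -> dotv u' v' <= dotv u v.
Proof.
move=> jn rA rB.
have [u [uA uu uo]] := unit_sub_orth_exists us (leq_trans jn rA) (ltnW jn).
have [v [vB vv vo]] := unit_sub_orth_exists vs (leq_trans jn rB) (ltnW jn).
have S0 : feasible_set A B us vs j !=set0.
  exists (row_mx u v); rewrite /feasible_set /= row_mxKl row_mxKr.
  by split=> // i ij; rewrite uo ?vo.
have cf : continuous (fun z : 'rV[R]_(m + m) => dotv (lsubmx z) (rsubmx z)).
  by apply: continuous_dotv; [exact: coord_continuous_lsubmx | exact: coord_continuous_rsubmx].
have [c /set_mem fc cmax] :=
  EVT_max_rV S0 (@feasible_set_compact _ _ _ _ A B us vs j) (continuous_subspaceT cf).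
exists (lsubmx c), (rsubmx c); split=> // u' v' f'.
have := cmax (row_mx u' v'); rewrite !row_mxKl !row_mxKr; apply; apply: mem_set.
by rewrite /feasible_set /= row_mxKl row_mxKr.
Qed.

Lemma feasible_prefix p q m n (A : 'M[R]_(p, m)) (B : 'M[R]_(q, m))
    (us vs us' vs' : 'I_n -> 'rV[R]_m) j u v :
  (forall i : 'I_n, (i < j)%N -> us' i = us i /\ vs' i = vs i) ->
  feasible A B us' vs' j u v <-> feasible A B us vs j u v.
Proof.
move=> agree; split=> -[uA vB uu vv orth]; split=> // i ij.
  by have [<- <-] := agree i ij; exact: orth.
by have [-> ->] := agree i ij; exact: orth.
Qed.

Lemma principal_exists p q m n (A : 'M[R]_(p, m)) (B : 'M[R]_(q, m)) :
  (n <= \rank A)%N -> (n <= \rank B)%N ->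
  exists us vs : 'I_n -> 'rV[R]_m, principal_seq A B us vs.
Proof.
move=> rA rB; suff /(_ n (leqnn n)) [us [vs Pk]] : forall j, (j <= n)%N ->
    exists us vs, forall k : 'I_n, (k < j)%N -> principal_step A B us vs k.
  by exists us, vs; apply/principal_seqP => k; exact: Pk.
elim=> [_|j IH jn]; first by exists (fun=> 0), (fun=> 0).
have [us [vs Pk]] := IH (ltnW jn).
have [u [v [fuv max]]] := feasible_max us vs jn rA rB.
pose us' (i : 'I_n) := if i == j :> nat then u else us i.
pose vs' (i : 'I_n) := if i == j :> nat then v else vs i.
have agree (i : 'I_n) : (i < j)%N -> us' i = us i /\ vs' i = vs i.
  by move=> ij; rewrite /us' /vs' ltn_eqF.
exists us', vs' => k; rewrite ltnS leq_eqVlt => /predU1P[kj|kj].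
  have us'k : us' k = u by rewrite /us' kj eqxx.
  have vs'k : vs' k = v by rewrite /vs' kj eqxx.
  rewrite /principal_step us'k vs'k kj; split; first exact/(feasible_prefix A B _ _ agree).
  by move=> u' v' /(feasible_prefix A B _ _ agree); exact: max.
have [fk maxk] := Pk k kj.
have agree_k (i : 'I_n) : (i < k)%N -> us' i = us i /\ vs' i = vs i.
  by move=> ik; exact: agree (ltn_trans ik kj).
rewrite /principal_step; have [-> ->] := agree k kj.
split; first exact/(feasible_prefix A B _ _ agree_k).
by move=> u' v' /(feasible_prefix A B _ _ agree_k); exact: maxk.
Qed.

End Existence.

Lemma allrel_flatten (T U : Type) (r : rel U) (xs : seq U) (f : T -> seq U) (s : seq T) :
  allrel r xs (flatten (map f s)) = all (fun y => allrel r xs (f y)) s.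
Proof. by elim: s => [|y s IH] /=; [exact: allrel0r | rewrite allrel_catr IH]. Qed.

Lemma pairwise_flatten_map (T U : Type) (r : rel U) (f : T -> seq U) (s : seq T) :
  (forall x, pairwise r (f x)) -> pairwise (fun x y => allrel r (f x) (f y)) s ->
  pairwise r (flatten (map f s)).
Proof.
move=> rf; elim: s => //= x s IH /andP[rx rs].
by rewrite pairwise_cat allrel_flatten rx rf IH.
Qed.

Section SquareCast.
Variable R : realType.

Lemma trmx_castmx_sq n1 n2 (e : n1 = n2) (X : 'M[R]_n1) :
  (castmx (e, e) X)^T = castmx (e, e) X^T.
Proof. by case: n2 / e; rewrite !castmx_id. Qed.

Lemma mulmx_castmx_sq n1 n2 (e : n1 = n2) (X Y : 'M[R]_n1) :
  castmx (e, e) X *m castmx (e, e) Y = castmx (e, e) (X *m Y).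
Proof. by case: n2 / e; rewrite !castmx_id. Qed.

Lemma mxtrace_castmx_sq n1 n2 (e : n1 = n2) (X : 'M[R]_n1) : \tr (castmx (e, e) X) = \tr X.
Proof. by case: n2 / e; rewrite !castmx_id. Qed.

Lemma castmx_sq1 n1 n2 (e : n1 = n2) : castmx (e, e) (1%:M : 'M[R]_n1) = 1%:M.
Proof. by case: n2 / e; rewrite !castmx_id. Qed.

Lemma eqmx_castmx_sq n1 n2 (e : n1 = n2) (X Y : 'M[R]_n1) :
  (X == Y)%MS -> (castmx (e, e) X == castmx (e, e) Y)%MS.
Proof. by case: n2 / e; rewrite !castmx_id. Qed.

Lemma is_orthoproj_castmx_sq n1 n2 (e : n1 = n2) (X : 'M[R]_n1) :
  is_orthoproj X -> is_orthoproj (castmx (e, e) X).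
Proof. by case: n2 / e; rewrite !castmx_id. Qed.

End SquareCast.

Section SignMatrices.
Variable R : realType.

Lemma kron22_mul_tr n a b c d a' b' c' d' (Q Q' : 'M[R]_n) :
  kron22 a b c d Q *m (kron22 a' b' c' d' Q')^T =
  block_mx ((a * a' + b * b') *: (Q *m Q'^T)) ((a * c' + b * d') *: (Q *m Q'^T))
           ((c * a' + d * b') *: (Q *m Q'^T)) ((c * c' + d * d') *: (Q *m Q'^T)).
Proof.
rewrite /kron22 tr_block_mx mulmx_block !linearZ /= -!scalemxAl !scalerA !scalerDl.
by rewrite !(mulrC a') !(mulrC b') !(mulrC c') !(mulrC d').
Qed.

Lemma tr_kron22_mul_tr k a b c d a' b' c' d' (Q Q' : 'M[R]_(2 ^ k)) :
  \tr (cast2 (kron22 a b c d Q) *m (cast2 (kron22 a' b' c' d' Q'))^T) =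
  (a * a' + b * b' + (c * c' + d * d')) * \tr (Q *m Q'^T).
Proof.
rewrite /cast2 trmx_castmx_sq mulmx_castmx_sq mxtrace_castmx_sq kron22_mul_tr.
by rewrite mxtrace_block !mxtraceZ -mulrDl.
Qed.

Lemma kron22_orthogonal k a b c d (Q : 'M[R]_(2 ^ k)) :
  a * a + b * b = 1 -> a * c + b * d = 0 -> c * c + d * d = 1 ->
  Q *m Q^T = 1%:M -> cast2 (kron22 a b c d Q) *m (cast2 (kron22 a b c d Q))^T = 1%:M.
Proof.
move=> ab ac cd QQ; rewrite /cast2 trmx_castmx_sq mulmx_castmx_sq kron22_mul_tr QQ.
rewrite ab ac cd (mulrC c) (mulrC d) ac !scale1r !scale0r -scalar_mx_block.
exact: castmx_sq1.
Qed.

Lemma Qs_orthogonal j Q : Q \in Qs R j -> Q *m Q^T = 1%:M.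
Proof.
elim: j Q => [|j IH] Q.
  by rewrite !inE => /orP[] /eqP->; rewrite tr_scalar_mx -scalar_mxM ?mulrNN mulr1.
case/flatten_mapP=> Q0 /IH QQ; rewrite !inE => /or4P[] /eqP->;
  by apply: kron22_orthogonal => //; ring.
Qed.

Lemma size_Qs j : size (Qs R j) = (2 * 4 ^ j)%N.
Proof.
elim: j => // j IH; rewrite /= size_flatten /shape -map_comp.
rewrite (eq_map (_ : _ =1 fun _ => 4%N)) //.
by rewrite sumnE big_map big_const_seq count_predT IH iter_addn addn0 expnS mulnCA.
Qed.

(* As [tr (Q Q^T) = 2^j], the value [- 2^j] means [Q' = - Q]. *)
Definition orth_or_opp j (Q Q' : 'M[R]_(2 ^ j)) :=
  (\tr (Q *m Q'^T) == 0) || (\tr (Q *m Q'^T) == - (2 ^ j)%:R).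

Lemma orth_or_opp_kron22 j (Q Q' : 'M[R]_(2 ^ j)) a b c d a' b' c' d' :
  (a * a' + b * b' + (c * c' + d * d') == 0) ||
  (a * a' + b * b' + (c * c' + d * d') == 2) ->
  orth_or_opp Q Q' -> orth_or_opp (cast2 (kron22 a b c d Q)) (cast2 (kron22 a' b' c' d' Q')).
Proof.
rewrite /orth_or_opp tr_kron22_mul_tr expnS natrM.
move=> /orP[] /eqP-> /orP[] /eqP->; rewrite ?(mul0r, mulr0, eqxx) //.
by rewrite mulrN eqxx orbT.
Qed.

Lemma Qs_orth_or_opp j : pairwise (@orth_or_opp j) (Qs R j).
Proof.
elim: j => [|j IH].
  by rewrite /= /orth_or_opp andbT tr_scalar_mx -scalar_mxM mulrN1 mxtrace_scalar mulNrn eqxx orbT.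
apply: pairwise_flatten_map => [Q|].
  rewrite /= !andbT /orth_or_opp !tr_kron22_mul_tr.
  by repeat (apply/andP; split); apply/orP; left; apply/eqP; ring.
move: IH; apply: sub_pairwise => Q Q' QQ'.
apply/allrelP => u v; rewrite !inE => /or4P[] /eqP-> /or4P[] /eqP->;
  apply: orth_or_opp_kron22 QQ'; apply/orP; first [left; apply/eqP; ring | right; apply/eqP; ring].
Qed.

End SignMatrices.

Section BlockProjections.
Variable R : realType.

Definition diagmx2 k (X Y : 'M[R]_(2 ^ k)) : 'M[R]_(2 ^ k.+1) := cast2 (block_mx X 0 0 Y).

Definition halfproj k (Q : 'M[R]_(2 ^ k)) : 'M[R]_(2 ^ k.+1) :=
  cast2 (2^-1 *: block_mx 1%:M Q Q^T 1%:M).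

Lemma block_diag_sub n (X X' Y Y' : 'M[R]_n) :
  (X <= X')%MS -> (Y <= Y')%MS -> (block_mx X 0 0 Y <= block_mx X' 0 0 Y')%MS.
Proof.
move=> /submxP[D1 ->] /submxP[D2 ->]; apply/submxP; exists (block_mx D1 0 0 D2).
by rewrite mulmx_block !mul0mx !mulmx0 !addr0 !add0r.
Qed.

Lemma orthoproj_block_diag k (A B : 'M[R]_(2 ^ k)) :
  orthoproj (cast2 (block_mx A 0 0 B)) = diagmx2 (orthoproj A) (orthoproj B).
Proof.
have [/andP[/eqP AT /eqP AA] /andP[sA sA']] := orthoprojP A.
have [/andP[/eqP BT /eqP BB] /andP[sB sB']] := orthoprojP B.
apply: orthoproj_eq; first apply: is_orthoproj_castmx_sq.
  rewrite /is_orthoproj tr_block_mx AT BT !trmx0 mulmx_block AA BB.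
  by rewrite !mul0mx !mulmx0 !addr0 !add0r eqxx.
by apply: eqmx_castmx_sq; rewrite /eqmx !block_diag_sub.
Qed.

Lemma orthoproj_block_01 k :
  orthoproj (cast2 (block_mx 0 1%:M 0 0 : 'M[R]_(2 ^ k + 2 ^ k))) = diagmx2 0 1%:M.
Proof.
have e : (cast2 (block_mx 0 1%:M 0 0 : 'M[R]_(2 ^ k + 2 ^ k)) ==
           cast2 (block_mx 0 0 0 1%:M))%MS.
  apply: eqmx_castmx_sq; apply/andP; split; apply/submxP.
    by exists (block_mx 0 1%:M 0 0); rewrite mulmx_block !mul0mx !mulmx0 mul1mx !add0r.
  by exists (block_mx 0 0 1%:M 0); rewrite mulmx_block !mul0mx !mulmx0 mul1mx !addr0.
by rewrite (orthoproj_eqmx e) orthoproj_block_diag orthoproj0 orthoproj1.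
Qed.

Lemma orthoproj_row_1Q k (Q : 'M[R]_(2 ^ k)) :
  Q *m Q^T = 1%:M -> orthoproj (cast2 (block_mx 1%:M Q 0 0)) = halfproj Q.
Proof.
move=> QQ; have QQ' : Q^T *m Q = 1%:M by apply: mulmx1C.
apply: orthoproj_eq; first apply: is_orthoproj_castmx_sq.
  rewrite /is_orthoproj linearZ /= tr_block_mx trmx1 trmxK eqxx /=.
  rewrite -scalemxAl -scalemxAr scalerA mulmx_block !mul1mx !mulmx1 QQ QQ'.
  have halves : 2^-1 / 2 + 2^-1 / 2 = 2^-1 :> R by field.
  by rewrite -add_block_mx scalerDr -scalerDl halves.
apply: eqmx_castmx_sq; apply/andP; split; apply/submxP.
  exists (2^-1 *: block_mx 1%:M 0 Q^T 0).
  by rewrite -scalemxAl mulmx_block !mul1mx !mulmx0 !mulmx1 !addr0 QQ'.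
exists (block_mx 1%:M Q 0 0).
have halves : 2^-1 + 2^-1 = 1 :> R by field.
rewrite -scalemxAr mulmx_block !mul1mx !mul0mx !mulmx1 QQ -add_block_mx.
by rewrite scalerDr -scalerDl halves scale1r.
Qed.

Lemma natr_pow2S k : (2 ^ k.+1)%:R = 2 * (2 ^ k)%:R :> R.
Proof. by rewrite expnS natrM. Qed.

Lemma mxtrace_diagmx2 k (X Y : 'M[R]_(2 ^ k)) : \tr (diagmx2 X Y) = \tr X + \tr Y.
Proof. by rewrite /diagmx2 /cast2 mxtrace_castmx_sq mxtrace_block. Qed.

Lemma mxtrace_halfproj k (Q : 'M[R]_(2 ^ k)) : \tr (halfproj Q) = (2 ^ k)%:R.
Proof.
by rewrite /halfproj /cast2 mxtrace_castmx_sq mxtraceZ mxtrace_block mxtrace1; field.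
Qed.

Lemma mxtrace_diagmx2_mul k (X Y X' Y' : 'M[R]_(2 ^ k)) :
  \tr (diagmx2 X Y *m diagmx2 X' Y') = \tr (X *m X') + \tr (Y *m Y').
Proof.
rewrite /diagmx2 /cast2 mulmx_castmx_sq mxtrace_castmx_sq mulmx_block mxtrace_block.
by rewrite !mulmx0 ?mul0mx !addr0 ?add0r.
Qed.

Lemma mxtrace_diagmx2_mul_half k (X Y Q : 'M[R]_(2 ^ k)) :
  \tr (diagmx2 X Y *m halfproj Q) = (\tr X + \tr Y) / 2.
Proof.
rewrite /diagmx2 /halfproj /cast2 mulmx_castmx_sq mxtrace_castmx_sq -scalemxAr mxtraceZ.
rewrite mulmx_block mxtrace_block !mul0mx !mulmx1 addr0 add0r.
by rewrite mulrC.
Qed.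

Lemma mxtrace_halfproj_mul k (Q Q' : 'M[R]_(2 ^ k)) :
  \tr (halfproj Q *m halfproj Q') = ((2 ^ k)%:R + \tr (Q *m Q'^T)) / 2.
Proof.
rewrite /halfproj /cast2 mulmx_castmx_sq mxtrace_castmx_sq -scalemxAr -scalemxAl scalerA.
rewrite mxtraceZ mulmx_block mxtrace_block !mul1mx !mxtraceD mxtrace1.
rewrite [\tr (Q^T *m Q')]mxtrace_mulC -mxtrace_tr trmx_mul trmxK.
by field.
Qed.

End BlockProjections.

Section Family.
Variable R : realType.

Local Notation Ps k := (map (@orthoproj R _ _) (Cs R k)).

(* For distinct members of C_(k+1), d^2 = 2^k - tr (P Q) is then 2^k or 2^(k-1). *)
Definition overlap k (P Q : 'M[R]_(2 ^ k.+1)) :=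
  (\tr (P *m Q) == 0) || (\tr (P *m Q) == (2 ^ k)%:R / 2).

Ltac solve_overlap := rewrite /overlap; apply/orP;
  first [left; apply/eqP; lra | right; apply/eqP; lra].

Lemma dotv_line2 (a b c d : R) :
  dotv (row 0 (line2 a b)) (row 0 (line2 c d)) = a * c + b * d.
Proof. by rewrite dotvE !big_ord_recl big_ord0 !mxE /= addr0. Qed.

Lemma eqmx_line2 (a b : R) : (line2 a b == row 0 (line2 a b))%MS.
Proof.
rewrite /eqmx row_sub andbT; apply/row_subP => i.
have [->|i_neq0] := eqVneq i 0; first exact: submx_refl.
by rewrite (_ : row i _ = 0) ?sub0mx //; apply/rowP => j; rewrite !mxE (negbTE i_neq0).
Qed.

Lemma orthoproj_line2 (a b : R) : a * a + b * b != 0 ->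
  orthoproj (line2 a b) = lineproj (row 0 (line2 a b)).
Proof.
by move=> ab; rewrite (orthoproj_eqmx (eqmx_line2 a b)) orthoproj_rV // -dotv_eq0 dotv_line2.
Qed.

Lemma orthoproj_Cs0 :
  Ps 0 = [seq lineproj (row 0 (line2 ab.1 ab.2)) | ab <- [:: (1, 0); (0, 1); (1, 1); (1, -1)]].
Proof. by rewrite /= !orthoproj_line2 //; apply/eqP; lra. Qed.

Definition diag_pairs k : seq ('M[R]_(2 ^ k.+1) * 'M[R]_(2 ^ k.+1)) :=
  [:: (1%:M, 0); (0, 1%:M)] ++ [seq (P, P) | P <- Ps k] ++ [seq (P, 1%:M - P) | P <- Ps k].

Lemma orthoproj_Cs_S k :
  Ps k.+1 = [seq diagmx2 XY.1 XY.2 | XY <- diag_pairs k] ++ [seq halfproj Q | Q <- Qs R k.+1].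
Proof.
rewrite /= !map_cat -!map_comp -catA orthoproj_block_diag orthoproj1 orthoproj0 orthoproj_block_01.
congr [:: _, _ & _ ++ _ ++ _]; apply/eq_in_map => X /=.
- by rewrite orthoproj_block_diag.
- by rewrite orthoproj_block_diag orthoproj_perpmx.
- by move=> /(@Qs_orthogonal R k.+1)/orthoproj_row_1Q.
Qed.

Lemma diag_pairs_tr k : {in Ps k, forall P, \tr P = (2 ^ k)%:R} ->
  {in diag_pairs k, forall XY, \tr XY.1 + \tr XY.2 = (2 ^ k.+1)%:R}.
Proof.
move=> trP XY; rewrite /diag_pairs /= !inE mem_cat.
move=> /or4P[/eqP->|/eqP->|/mapP[P /trP trP' ->]|/mapP[P /trP trP' ->]] /=;
  rewrite ?mxtrace1 ?linear0 ?linearB /= ?trP' ?mxtrace1 ?natr_pow2S; lra.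
Qed.

Lemma mxtrace_Cs k : {in Ps k, forall P, \tr P = (2 ^ k)%:R}.
Proof.
elim: k => [|k IH] P.
  rewrite orthoproj_Cs0 !inE => /or4P[] /eqP->;
  by rewrite mxtrace_lineproj // -dotv_eq0 dotv_line2 /=; apply/eqP; lra.
rewrite orthoproj_Cs_S mem_cat => /orP[/mapP[XY /(diag_pairs_tr IH) tr ->] | /mapP[Q _ ->]].
  by rewrite mxtrace_diagmx2.
by rewrite mxtrace_halfproj.
Qed.

Ltac expand_tr := rewrite /overlap ?mxtrace_diagmx2_mul /=
  ?(mul1mx, mulmx1, mul0mx, mulmx0, mulmxBl, mulmxBr, linear0, linearB, linearD) /=
  ?mxtrace1 ?natr_pow2S.

Lemma overlap_Cs0 : pairwise (@overlap 0) (Ps 0).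
Proof.
rewrite orthoproj_Cs0 pairwise_map /= /overlap !mxtrace_lineproj_mul !dotv_line2 /= expn0 !andbT.
by repeat (apply/andP; split); apply/orP; first [left; apply/eqP; field | right; apply/eqP; field].
Qed.

Lemma overlap_diag_pairs k : pairwise (@overlap k) (Ps k) ->
  pairwise (fun XY XY' => overlap (diagmx2 XY.1 XY.2) (diagmx2 XY'.1 XY'.2)) (diag_pairs k).
Proof.
move=> IH; have trP := @mxtrace_Cs k.
rewrite /diag_pairs !pairwise_cat pairwise2; apply/and3P; split; [|by expand_tr; solve_overlap|].
  apply/allrelP => XY XY'; rewrite !inE mem_cat.
  by move=> /orP[] /eqP-> /orP[] /mapP[P /trP trP' ->]; expand_tr; rewrite trP'; solve_overlap.
apply/and3P; split.
- apply/allrelP => XY XY' /mapP[P /trP trP' ->] /mapP[P' /trP trP'' ->].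
  by expand_tr; rewrite trP'; solve_overlap.
- rewrite pairwise_map; apply: sub_pairwise IH => P P' /orP[] /eqP h;
    by rewrite /relpre /=; expand_tr; solve_overlap.
rewrite pairwise_map; apply: sub_in_pairwise (allss _) IH
  => P P' /trP trP' /trP trP'' /orP[] /eqP h;
  by rewrite /relpre /=; expand_tr; rewrite trP' trP''; solve_overlap.
Qed.

Lemma overlap_Cs k : pairwise (@overlap k) (Ps k).
Proof.
elim: k => [|k IH]; first exact: overlap_Cs0.
have trXY := diag_pairs_tr (@mxtrace_Cs k).
rewrite orthoproj_Cs_S pairwise_cat !pairwise_map; apply/and3P; split.
- rewrite allrel_mapl allrel_mapr; apply/allrelP => XY Q /trXY trXY' _.
  by rewrite /overlap mxtrace_diagmx2_mul_half trXY' natr_pow2S; solve_overlap.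
- exact: overlap_diag_pairs.
apply: sub_pairwise (@Qs_orth_or_opp R k.+1) => Q Q' /orP[] /eqP h.
  by rewrite /relpre /= /overlap mxtrace_halfproj_mul h natr_pow2S; solve_overlap.
by rewrite /relpre /= /overlap mxtrace_halfproj_mul h natr_pow2S; solve_overlap.
Qed.

End Family.

Lemma pairwise_in (T : eqType) (r : rel T) (s : seq T) x y :
  pairwise r s -> x \in s -> y \in s -> [\/ x = y, r x y | r y x].
Proof.
elim: s => // z s IH /= /andP[/allP rz rs].
rewrite !inE => /predU1P[->|xs] /predU1P[->|ys].
- by constructor 1.
- by constructor 2; exact: rz.
- by constructor 3; exact: rz.
- exact: IH.
Qed.

Lemma size_Cs (R : realType) k :
  size (Cs R k) = ((2 ^ k.+1 - 1) * (2 ^ k.+1 + 2))%N.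
Proof.
elim: k => // k IH; rewrite /= !size_cat !size_map size_Qs IH.
have -> : (4 ^ k.+1 = 2 ^ k.+1 * 2 ^ k.+1)%N by rewrite -expnMn.
rewrite [(2 ^ k.+2)%N]expnS; have : (0 < 2 ^ k.+1)%N by rewrite expn_gt0.
set x := (2 ^ k.+1)%N; nia.
Qed.

Section CsProperties.
Variables (R : realType) (k : nat).

Lemma rank_Cs A : A \in Cs R k -> \rank A = (2 ^ k)%N.
Proof.
move=> Ain; apply/eqP; rewrite -(eqr_nat R) rank_orthoproj mxtrace_Cs //.
exact: map_f.
Qed.

Lemma overlap_irrefl P : P \in map (@orthoproj R _ _) (Cs R k) -> ~~ overlap P P.
Proof.
move=> Pin; have trP := mxtrace_Cs Pin.
have N_gt0 : 0 < (2 ^ k)%:R :> R by rewrite ltr0n expn_gt0.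
case/mapP: Pin trP => A _ -> trP; have [/andP[_ /eqP PP] _] := orthoprojP A.
by rewrite /overlap PP trP negb_or; apply/andP; split; apply/eqP; lra.
Qed.

Lemma uniq_genmx_Cs : uniq [seq <<A>>%MS | A <- Cs R k].
Proof.
apply: (@map_uniq _ _ (@orthoproj R _ _)); rewrite -map_comp.
rewrite (eq_map (_ : _ =1 @orthoproj R _ _)) => [|A].
  by rewrite uniq_pairwise; apply: sub_in_pairwise (allss _) (overlap_Cs R k) => P Q Pin _ PQ;
    apply/eqP => eqPQ; move: PQ; rewrite -eqPQ; apply/negP; exact: overlap_irrefl.
by apply: orthoproj_eqmx; apply/eqmxP; exact: genmxE.
Qed.

Lemma overlap_Cs_neq A B : A \in Cs R k -> B \in Cs R k -> ~~ (A == B)%MS ->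
  overlap (orthoproj A) (orthoproj B).
Proof.
move=> Ain Bin nAB.
have [eAB|//|] := pairwise_in (overlap_Cs R k) (map_f _ Ain) (map_f _ Bin).
  case/negP: nAB; apply/eqmxP; apply: eqmx_trans (eqmx_sym (eqmxP (orthoprojP A).2)) _.
  by rewrite eAB; exact/eqmxP/(orthoprojP B).2.
by rewrite /overlap mxtrace_mulC.
Qed.

End CsProperties.

Theorem mainTheorem1 (R : realType) (k : nat) :
  let m := (2 ^ k.+1)%N in
  [/\ size (undup [seq <<A>>%MS | A <- Cs R k]) = ((m - 1) * (m + 2))%N,
      (forall A, A \in Cs R k -> \rank A = (2 ^ k)%N) &
      (forall A B, A \in Cs R k -> B \in Cs R k -> ~~ (A == B)%MS ->
         (exists us vs : 'I_(2 ^ k) -> 'rV[R]_m, principal_seq A B us vs) /\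
         (forall us vs : 'I_(2 ^ k) -> 'rV[R]_m, principal_seq A B us vs ->
            dist_of us vs = Num.sqrt (m%:R / 4) \/
            dist_of us vs = Num.sqrt (m%:R / 2)))].
Proof.
move=> m; have rk := @rank_Cs R k.
split=> [|//|A B Ain Bin nAB].
  by rewrite undup_id ?uniq_genmx_Cs // size_map size_Cs.
split=> [|us vs P]; first by apply: principal_exists; rewrite rk.
rewrite (principal_dist P (rk _ Ain) (rk _ Bin)) /m natr_pow2S.
by case/orP: (overlap_Cs_neq Ain Bin nAB) => /eqP->; [right | left]; congr Num.sqrt; field.
Qed.
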